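(* Let $\Omega\subseteq\mathbf{W}^{\mathbb{R}}_D$ be a weighted clone. Then $\mathrm{supp}(\Omega)=\mathrm{Pol}(\mathrm{Imp}_{\mathbb{R}}(\Omega))$.
   Context: $D$ is a fixed finite set with $|D|\ge2$; $\overline{\mathbb{R}}=\mathbb{R}\cup\{\infty\}$. An $m$-ary weighted relation is $\gamma:D^m\to\overline{\mathbb{R}}$; $\mathbf{\Phi}^{\mathbb{R}}_D$ is the set of all of them; $\mathrm{Feas}(\gamma)=\{\mathbf{x}:\gamma(\mathbf{x})<\infty\}$. A $k$-ary operation is $f:D^k\to D$, applied to tuples coordinatewise; $\mathbf{O}^{(k)}_D$ is the set of $k$-ary operations. $f$ is a polymorphism of $\gamma$ if $f(\mathbf{x}_1,\dots,\mathbf{x}_k)\in\mathrm{Feas}(\gamma)$ whenever all $\mathbf{x}_i\in\mathrm{Feas}(\gamma)$; $\mathrm{Pol}(\Gamma)$ is the set of operations that are polymorphisms of every $\gamma\in\Gamma$. Projections: $e^{(k)}_i(x_1,\dots,x_k)=x_i$; $\mathbf{J}_D$ all projections, $\mathbf{J}_D^{(k)}$ the $k$-ary ones. Superposition: $f[g_1,\dots,g_k](\mathbf{x})=f(g_1(\mathbf{x}),\dots,g_k(\mathbf{x}))$. A $k$-ary weighting is $\omega:\mathbf{O}^{(k)}_D\to\mathbb{R}$ with $\sum_f\omega(f)=0$ and $\omega(f)<0$ only if $f$ is a projection; $\mathbf{W}^{\mathbb{R}}_D$ is the set of all weightings. $\mathrm{supp}(\omega)=\mathbf{J}_D^{(k)}\cup\{f:\omega(f)>0\}$;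 $\mathrm{supp}(\Omega)=\mathbf{J}_D\cup\bigcup_{\omega\in\Omega}\mathrm{supp}(\omega)$. Superposition of a weighting: $\omega[g_1,\dots,g_k](f')=\sum_{f:f[g_1,\dots,g_k]=f'}\omega(f)$, proper if it is a weighting. Topology: $k$-ary weightings lie in $\mathbb{R}^{\mathbf{O}^{(k)}_D}$ with disjoint union topology over $k$. A weighted clone is a non-empty set $\Omega$ of weightings closed under scaling by non-negative reals, addition of weightings of equal arity, and proper superposition with operations from $\mathrm{supp}(\Omega)$, and topologically closed. A $k$-ary weighting $\omega$ improves $\gamma$ if $\mathrm{supp}(\omega)\subseteq\mathrm{Pol}(\gamma)$ and for all $\mathbf{x}_1,\dots,\mathbf{x}_k\in\mathrm{Feas}(\gamma)$, $\sum_{f\in\mathrm{supp}(\omega)}\omega(f)\gamma(f(\mathbf{x}_1,\dots,\mathbf{x}_k))\le0$. $\mathrm{Imp}_{\mathbb{R}}(\Omega)$ is the set of weighted relations in $\mathbf{\Phi}^{\mathbb{R}}_D$ improved by every $\omega\in\Omega$. *)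

From mathcomp Require Import all_boot all_algebra all_classical all_reals all_analysis.
Import numFieldTopology.Exports.
Import GRing.Theory Num.Theory.

Set Implicit Arguments.
Unset Strict Implicit.
Unset Printing Implicit Defensive.

Local Open Scope ring_scope.

Section Defs.
Variables (R : realType) (D : finType).

Definition tup (m : nat) := {ffun 'I_m -> D}.

Definition op (k : nat) := {ffun tup k -> D}.

Definition apply_op (k m : nat) (f : op k) (xs : 'I_k -> tup m) : tup m :=
  [ffun j => f [ffun i => xs i j]].

Definition proj (k : nat) (i : 'I_k) : op k := [ffun x : tup k => x i].
Definition is_proj (k : nat) (f : op k) : bool := [exists i, f == proj i].

Definition superpose_op (k l : nat) (f : op k) (g : 'I_k -> op l) : op l :=
  [ffun x : tup l => f [ffun i => g i x]].

(* weighted relations gamma : D^m -> R \cup {oo}; None stands for oo *)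
Record wrel := WRel { wr_ar : nat; wr_fn : tup wr_ar -> option R }.

Definition feas (g : wrel) (x : tup (wr_ar g)) : bool := g.(wr_fn) x != None.

(* finite value of a feasible tuple (value irrelevant on infeasible tuples) *)
Definition wval (g : wrel) (x : tup (wr_ar g)) : R :=
  if g.(wr_fn) x is Some r then r else 0.

Definition polymorphism (k : nat) (f : op k) (g : wrel) : Prop :=
  forall xs : 'I_k -> tup (wr_ar g),
    (forall i, feas (xs i)) -> feas (apply_op f xs).

Definition Pol (Gamma : set wrel) (k : nat) (f : op k) : Prop :=
  forall g, Gamma g -> polymorphism f g.

Definition is_weighting (k : nat) (w : op k -> R) : Prop :=
  \sum_(f : op k) w f = 0 /\ (forall f, w f < 0 -> is_proj f).

Definition in_supp (k : nat) (w : op k -> R) (f : op k) : bool :=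
  is_proj f || (0 < w f).

Definition wset := forall k : nat, set (op k -> R).

Definition suppW (Om : wset) (k : nat) (f : op k) : Prop :=
  is_proj f \/ exists w, Om k w /\ in_supp w f.

Definition superpose_w (k l : nat) (w : op k -> R) (g : 'I_k -> op l) : op l -> R :=
  fun f' => \sum_(f : op k | superpose_op f g == f') w f.

Definition weighted_clone (Om : wset) : Prop :=
  (exists k w, Om k w) /\
  [/\ (forall k w, Om k w -> is_weighting w),
      (forall k w (c : R), Om k w -> 0 <= c -> Om k (fun f => c * w f)),
      (forall k w1 w2, Om k w1 -> Om k w2 -> Om k (fun f => w1 f + w2 f)),
      (forall k l w (g : 'I_k -> op l), Om k w ->
          (forall i, suppW Om (g i)) -> is_weighting (superpose_w w g) ->
          Om l (superpose_w w g))
    & (forall k, closed (Om k : set {ptws op k -> R}))].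

Definition improves (k : nat) (w : op k -> R) (g : wrel) : Prop :=
  (forall f, in_supp w f -> polymorphism f g) /\
  (forall xs : 'I_k -> tup (wr_ar g), (forall i, feas (xs i)) ->
     \sum_(f : op k | in_supp w f) w f * wval (apply_op f xs) <= 0).

Definition Imp (Om : wset) : set wrel :=
  fun g => forall k w, Om k w -> improves w g.

End Defs.

From Pilot Require Import Defs.
From mathcomp Require Import all_boot all_algebra all_classical all_reals all_analysis.
From mathcomp Require Import lra.
Import order.Order.TTheory GRing.Theory Num.Theory.

(* The inclusion of supp(Omega) in Pol(Imp(Omega)) is immediate from the
   definitions.  Conversely, let gamma_k be the crisp relation on D^(|D^k|)
   whose feasible tuples are the tables of the k-ary operations in
   supp(Omega); the k columns of the table of the identity are the tables of
   the projections, so a polymorphism of gamma_k lies in supp(Omega).  It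
   remains to see that Omega improves gamma_k, i.e. that supp(Omega) is closed
   under superposition h[g_1,...,g_l] with h in supp(w), w in Omega.  Since w[g]
   may take negative values on non-projections g_i, we add to it c * sum W_i
   with W_i in Omega, W_i(g_i) > 0 and c large: the result is a proper
   weighting of Omega (it is a superposition of a weighting of arity l + k
   built from w and the W_i), still positive at h[g]. *)

Set Implicit Arguments.
Unset Strict Implicit.
Unset Printing Implicit Defensive.

Local Open Scope ring_scope.

Section Superposition.
Variables (R : realType) (D : finType).

Lemma superpose_op_proj k l (i : 'I_k) (g : 'I_k -> op D l) :
  superpose_op (Defs.proj D i) g = g i.
Proof. by apply/ffunP => x; rewrite !ffunE. Qed.

Lemma superpose_op_projs k (f : op D k) : superpose_op f (@Defs.proj D k) = f.
Proof. by apply/ffunP => x; rewrite ffunE; congr (f _); apply/ffunP => i; rewrite !ffunE. Qed.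

Lemma superpose_opA k l m (f : op D k) (g : 'I_k -> op D l) (G : 'I_l -> op D m) :
  superpose_op (superpose_op f g) G = superpose_op f (fun i => superpose_op (g i) G).
Proof. by apply/ffunP => x; rewrite !ffunE; congr (f _); apply/ffunP => i; rewrite !ffunE. Qed.

Lemma apply_op_proj k m (i : 'I_k) (xs : 'I_k -> tup D m) :
  apply_op (Defs.proj D i) xs = xs i.
Proof. by apply/ffunP => j; rewrite !ffunE. Qed.

Lemma weighting_ge0 k (w : op D k -> R) f : is_weighting w -> ~~ is_proj f -> 0 <= w f.
Proof. by case=> _ neg nf; rewrite leNgt; apply: contra nf => /neg. Qed.

Lemma is_weighting_intro k (w : op D k -> R) :
  \sum_f w f = 0 -> (forall f, ~~ is_proj f -> 0 <= w f) -> is_weighting w.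
Proof. by move=> s0 pos; split=> // f; apply: contraTT => /pos; rewrite leNgt. Qed.

Lemma sum_superpose_w k l (w : op D k -> R) (g : 'I_k -> op D l) :
  \sum_f superpose_w w g f = \sum_f w f.
Proof. by rewrite [RHS](partition_big (fun f => superpose_op f g) predT). Qed.

Lemma superpose_w_lt0 k l (w : op D k -> R) (g : 'I_k -> op D l) f' :
  superpose_w w g f' < 0 -> exists2 f, superpose_op f g = f' & w f < 0.
Proof.
move=> lt0; apply: contrapT => noneg; move: lt0; rewrite ltNge sumr_ge0 // => f /eqP Hf.
by rewrite leNgt; apply/negP => wf_lt0; apply: noneg; exists f.
Qed.

Lemma superpose_w_gt0 k l (w : op D k -> R) (g : 'I_k -> op D l) (h : op D k) :
  is_weighting w -> 0 < w h -> (forall i, superpose_op h g <> g i) ->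
  0 < superpose_w w g (superpose_op h g).
Proof.
move=> Hw wh_gt0 not_g; rewrite /superpose_w (bigD1 h) //= ltr_pwDl //.
apply: sumr_ge0 => F /andP [/eqP FgE _]; rewrite leNgt; apply/negP.
by case/(proj2 Hw)/existsP => i /eqP FE; apply: (not_g i); rewrite -FgE FE superpose_op_proj.
Qed.

Lemma superpose_w_proj_weighting k l (w : op D k -> R) (g : 'I_k -> op D l) :
  is_weighting w -> (forall i, is_proj (g i)) -> is_weighting (superpose_w w g).
Proof.
move=> [s0 neg] gp; split; first by rewrite sum_superpose_w.
by move=> f' /superpose_w_lt0 [f <- /neg /existsP [i /eqP ->]]; rewrite superpose_op_proj.
Qed.

Lemma superpose_wA k l m (w : op D k -> R) (g : 'I_k -> op D l) (G : 'I_l -> op D m) :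
  superpose_w (superpose_w w g) G =1 superpose_w w (fun i => superpose_op (g i) G).
Proof.
move=> f''; rewrite /superpose_w.
rewrite [RHS](partition_big (fun f => superpose_op f g)
   (fun f' => superpose_op f' G == f'')) /=; last by move=> f; rewrite superpose_opA.
apply: eq_bigr => f' /eqP Hf'; apply: eq_bigl => f; rewrite -superpose_opA.
by rewrite andbC; case: eqP => //= ->; rewrite Hf' eqxx.
Qed.

Lemma superpose_w_projs k (w : op D k -> R) : superpose_w w (@Defs.proj D k) =1 w.
Proof.
move=> f; rewrite /superpose_w (eq_bigl (fun F => F == f)) ?big_pred1_eq //.
by move=> F; rewrite superpose_op_projs.
Qed.

Lemma superpose_w_relabel k l m (w : op D k -> R) (sigma : 'I_k -> 'I_l)
    (G : 'I_l -> op D m) :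
  superpose_w (superpose_w w (fun i => Defs.proj D (sigma i))) G
  =1 superpose_w w (fun i => G (sigma i)).
Proof.
move=> f; rewrite superpose_wA; apply: eq_bigl => F.
by congr (superpose_op _ _ == _); apply: funext => i; rewrite superpose_op_proj.
Qed.

Lemma superpose_wD k l (a b : op D k -> R) (g : 'I_k -> op D l) f :
  superpose_w (fun F => a F + b F) g f = superpose_w a g f + superpose_w b g f.
Proof. exact: big_split. Qed.

Lemma superpose_wZ k l (c : R) (a : op D k -> R) (g : 'I_k -> op D l) f :
  superpose_w (fun F => c * a F) g f = c * superpose_w a g f.
Proof. by rewrite /superpose_w mulr_sumr. Qed.

Lemma superpose_w_sum k l (I : finType) (P : pred I) (Phi : I -> op D k -> R)
    (g : 'I_k -> op D l) f :
  superpose_w (fun F => \sum_(j | P j) Phi j F) g f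
  = \sum_(j | P j) superpose_w (Phi j) g f.
Proof. exact: exchange_big. Qed.

End Superposition.

Lemma exists_compensating_scale (R : realFieldType) (T : finType) (P : pred T)
    (a b : T -> R) :
  (forall x, P x -> 0 <= b x) -> (forall x, P x -> a x < 0 -> 0 < b x) ->
  exists2 c, 0 <= c & forall x, P x -> 0 <= a x + c * b x.
Proof.
move=> b_ge0 b_gt0; exists (\sum_x `|a x| / `|b x|).
  by apply: sumr_ge0 => x _; rewrite divr_ge0.
move=> x Px; have [ax_ge0|ax_lt0] := lerP 0 (a x).
  by rewrite addr_ge0 // mulr_ge0 ?b_ge0 // sumr_ge0 // => y _; rewrite divr_ge0.
have bx_gt0 := b_gt0 x Px ax_lt0.
have le_c : `|a x| / `|b x| <= \sum_y `|a y| / `|b y|.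
  by rewrite (bigD1 x) //= lerDl sumr_ge0 // => y _; rewrite divr_ge0.
have := ler_wpM2r (ltW bx_gt0) le_c.
rewrite (gtr0_norm bx_gt0) divfK ?gt_eqF // ltr0_norm //.
lra.
Qed.

Section WeightedClone.
Variables (R : realType) (D : finType).
(* Keeps the arity argument of Om explicit. *)
Unset Implicit Arguments.
Variable Om : wset R D.
Set Implicit Arguments.
Hypothesis HOm : weighted_clone Om.

Lemma clone_weighting k (w : op D k -> R) : Om k w -> is_weighting w.
Proof. by case: HOm => _ [H _ _ _ _]; apply: H. Qed.

Lemma clone_scale k (w : op D k -> R) (c : R) :
  Om k w -> 0 <= c -> Om k (fun f => c * w f).
Proof. by case: HOm => _ [_ H _ _ _]; apply: H. Qed.

Lemma clone_add k (w1 w2 : op D k -> R) :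
  Om k w1 -> Om k w2 -> Om k (fun f => w1 f + w2 f).
Proof. by case: HOm => _ [_ _ H _ _]; apply: H. Qed.

Lemma clone_superpose k l (w : op D k -> R) (g : 'I_k -> op D l) :
  Om k w -> (forall i, suppW Om (g i)) -> is_weighting (superpose_w w g) ->
  Om l (superpose_w w g).
Proof. by case: HOm => _ [_ _ _ H _]; apply: H. Qed.

Lemma suppW_proj k (i : 'I_k) : suppW Om (Defs.proj D i).
Proof. by left; apply/existsP; exists i. Qed.

Lemma clone_relabel k l (w : op D k -> R) (sigma : 'I_k -> 'I_l) :
  Om k w -> Om l (superpose_w w (fun i => Defs.proj D (sigma i))).
Proof.
move=> Hw; apply: clone_superpose => // [i|]; first exact: suppW_proj.
apply: superpose_w_proj_weighting; first exact: clone_weighting Hw.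
by move=> i; apply/existsP; exists (sigma i).
Qed.

Lemma clone_sum n (w0 : op D n -> R) (I : Type) (r : seq I) (P : pred I)
    (Phi : I -> op D n -> R) :
  Om n w0 -> (forall j, P j -> Om n (Phi j)) ->
  Om n (fun f => \sum_(j <- r | P j) Phi j f).
Proof.
move=> Hw0 HPhi; elim: r => [|j r IH].
  rewrite (_ : (fun f => _) = fun f => 0 * w0 f); first exact: clone_scale.
  by apply: funext => f; rewrite big_nil mul0r.
have [Pj|nPj] := boolP (P j).
  rewrite (_ : (fun f => _) = fun f => Phi j f + \sum_(j <- r | P j) Phi j f).
    exact: clone_add (HPhi _ Pj) IH.
  by apply: funext => f; rewrite big_cons Pj.
by rewrite (_ : (fun f => _) = fun f => \sum_(j <- r | P j) Phi j f) //;
  apply: funext => f; rewrite big_cons (negbTE nPj).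
Qed.

(* The combination is w'[g_1, ..., g_l, e_1, ..., e_k], where w' of arity
   l + k is w on the first l arguments plus c * sum W_j on the last k. *)
Lemma clone_superpose_combination k l (w : op D l -> R) (g : 'I_l -> op D k)
    (P : pred 'I_l) (W : 'I_l -> op D k -> R) (c : R) :
  Om l w -> (forall i, suppW Om (g i)) -> (forall j, P j -> Om k (W j)) -> 0 <= c ->
  is_weighting (fun f => superpose_w w g f + c * \sum_(j | P j) W j f) ->
  Om k (fun f => superpose_w w g f + c * \sum_(j | P j) W j f).
Proof.
move=> Hw Hg HW c_ge0 Hweight.
pose G (i : 'I_(l + k)) : op D k :=
  match fintype.split i with inl a => g a | inr b => Defs.proj D b end.
have GL : (fun i => G (lshift k i)) = g.
  by apply: funext => i; rewrite /G (unsplitK (inl i)).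
have GR : (fun i => G (rshift l i)) = @Defs.proj D k.
  by apply: funext => i; rewrite /G (unsplitK (inr i)).
pose Theta f := superpose_w w (fun i => Defs.proj D (lshift k i)) f
  + c * \sum_(j | P j) superpose_w (W j) (fun i => Defs.proj D (rshift l i)) f.
have HTheta : Om (l + k) Theta.
  have Hwl := clone_relabel (lshift k) Hw.
  apply: clone_add => //; apply: clone_scale => //; apply: clone_sum Hwl _ => j Pj.
  exact/clone_relabel/HW.
have ThetaE : superpose_w Theta G
    = fun f => superpose_w w g f + c * \sum_(j | P j) W j f.
  apply: funext => f; rewrite superpose_wD superpose_wZ superpose_w_sum.
  rewrite superpose_w_relabel GL; congr (_ + _ * _); apply: eq_bigr => j _.
  by rewrite superpose_w_relabel GR superpose_w_projs.
rewrite -ThetaE in Hweight *; apply: clone_superpose => // i.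
by rewrite /G; case: (fintype.split i) => a //; exact: suppW_proj.
Qed.

Lemma suppW_superpose k l (w : op D l -> R) (h : op D l) (g : 'I_l -> op D k) :
  Om l w -> in_supp w h -> (forall i, suppW Om (g i)) -> suppW Om (superpose_op h g).
Proof.
move=> Hw Hh Hg.
have [[j ->]|not_g] := pselect (exists j, superpose_op h g = g j); first exact: Hg.
have [|hg_nproj] := boolP (is_proj (superpose_op h g)); first by left.
have wh_gt0 : 0 < w h.
  case/orP: Hh => // /existsP [i /eqP hE]; case: not_g.
  by exists i; rewrite hE superpose_op_proj.
have /choice [W HW] : forall j, exists W : op D k -> R,
    ~~ is_proj (g j) -> Om k W /\ 0 < W (g j).
  move=> j; case: (Hg j) => [gj_proj|[W [HWj /orP gj_supp]]].
    by exists (fun _ => 0); rewrite gj_proj.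
  by exists W => gj_nproj; case: gj_supp => //; rewrite (negbTE gj_nproj).
pose om := superpose_w w g.
pose Psi f := \sum_(j | ~~ is_proj (g j)) W j f.
have Psi_ge0 f : ~~ is_proj f -> 0 <= Psi f.
  by move=> f_nproj; apply: sumr_ge0 => j /HW [/clone_weighting HWj _];
    exact: weighting_ge0.
have Psi_gt0 f : ~~ is_proj f -> om f < 0 -> 0 < Psi f.
  move=> f_nproj /superpose_w_lt0 [F FgE /(proj2 (clone_weighting Hw))].
  case/existsP => i /eqP FE.
  rewrite -FgE FE superpose_op_proj in f_nproj *.
  rewrite /Psi (bigD1 i) //= ltr_pwDl ?(proj2 (HW i f_nproj)) //.
  by apply: sumr_ge0 => j /andP [/HW [/clone_weighting HWj _] _]; exact: weighting_ge0.
have [c c_ge0 Hc] := exists_compensating_scale Psi_ge0 Psi_gt0.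
have Psi_sum0 : \sum_f Psi f = 0.
  rewrite exchange_big big1 // => j /HW [/clone_weighting [] + _ _]; exact.
right; exists (fun f => om f + c * Psi f); split.
  apply: clone_superpose_combination => // [j /HW []//|].
  apply: is_weighting_intro => //.
  by rewrite big_split /= -mulr_sumr Psi_sum0 mulr0 addr0 sum_superpose_w;
    case: (clone_weighting Hw).
apply/orP; right; rewrite ltr_wpDr ?mulr_ge0 ?Psi_ge0 //.
exact: superpose_w_gt0 (clone_weighting Hw) wh_gt0 (fun i E => not_g (ex_intro _ i E)).
Qed.

End WeightedClone.

Section SupportRelation.
Variables (R : realType) (D : finType).
Unset Implicit Arguments.
Variable Om : wset R D.
Set Implicit Arguments.

(* Tuples of length #|D^k| are tables of k-ary operations, indexed by enum_rank. *)
Definition op_of_table k (x : tup D #|{: tup D k}|) : op D k :=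
  [ffun t => x (enum_rank t)].

Definition proj_table k (i : 'I_k) : tup D #|{: tup D k}| :=
  [ffun r => (enum_val r : tup D k) i].

Definition supp_rel k : wrel R D :=
  @WRel R D #|{: tup D k}|
    (fun x => if `[< suppW Om (op_of_table x) >] then Some 0 else None).

Lemma feas_supp_rel k (x : tup D #|{: tup D k}|) :
  @feas R D (supp_rel k) x = `[< suppW Om (op_of_table x) >].
Proof. by rewrite /feas /=; case: asboolP. Qed.

Lemma op_of_table_apply k l (h : op D l) (xs : 'I_l -> tup D #|{: tup D k}|) :
  op_of_table (apply_op h xs) = superpose_op h (fun i => op_of_table (xs i)).
Proof. by apply/ffunP => t; rewrite !ffunE; congr (h _); apply/ffunP => i; rewrite !ffunE. Qed.

Lemma op_of_proj_table k (i : 'I_k) : op_of_table (proj_table i) = Defs.proj D i.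
Proof. by apply/ffunP => t; rewrite !ffunE enum_rankK. Qed.

Lemma supp_rel_Imp k : weighted_clone Om -> Imp Om (supp_rel k).
Proof.
move=> HOm l w Hw; split.
  move=> f Hf xs Hxs; rewrite feas_supp_rel op_of_table_apply; apply/asboolP.
  by apply: (suppW_superpose HOm Hw Hf) => i; have := Hxs i; rewrite feas_supp_rel => /asboolP.
move=> xs _; rewrite big1 // => f _; rewrite /wval /=.
by case: asboolP => _; rewrite mulr0.
Qed.

Lemma Pol_suppW k (f : op D k) : weighted_clone Om -> Pol (Imp Om) f -> suppW Om f.
Proof.
move=> HOm /(_ _ (supp_rel_Imp k HOm) (@proj_table k)) Hfeas.
have : @feas R D (supp_rel k) (apply_op f (@proj_table k)).
  by apply: Hfeas => i; rewrite feas_supp_rel op_of_proj_table; apply/asboolP; exact: suppW_proj.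
rewrite feas_supp_rel op_of_table_apply (funext (@op_of_proj_table k)).
by rewrite superpose_op_projs => /asboolP.
Qed.

Lemma suppW_Pol k (f : op D k) : suppW Om f -> Pol (Imp Om) f.
Proof.
case=> [/existsP [i /eqP ->]|[w [Hw f_supp]]] g Hg.
  by move=> xs Hxs; rewrite apply_op_proj.
exact: (proj1 (Hg _ _ Hw) f f_supp).
Qed.

End SupportRelation.

Unset Implicit Arguments.

Theorem lemma5 (R : realType) (D : finType) (hD : (1 < #|D|)%N)
  (Om : wset R D) :
  weighted_clone Om ->
  forall (k : nat) (f : op D k), suppW Om f <-> Pol (Imp Om) f.
Proof.
move=> HOm k f; split; [exact: suppW_Pol | exact: Pol_suppW].
Qed.
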